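(* Let $T$ be a basic maximal rigid object of $\mathcal{C}_n$ with top summand $T_1=(1,n-1)$, and let $X,Y\in\mathcal{F}$ with $X,Y\notin\operatorname{add}\tau T$. If $\sigma^{\mathcal{T}}_X=\sigma^{\mathcal{T}}_Y$ and $\sigma^{\mathcal{D}}_X=\sigma^{\mathcal{D}}_Y$, then $X=Y$.
   Context: Let $k$ be algebraically closed, $n\ge2$, $\mathcal{T}_n$ the tube of rank $n$ (finite-dimensional nilpotent representations of the cyclically oriented $\tilde A_{n-1}$-quiver; AR-translation $\tau$), $\mathcal{C}_n=D^b(\mathcal{T}_n)/\tau^{-1}[1]$ the cluster tube, with indecomposables identified with those of $\mathcal{T}_n$. Indecomposables have coordinates $(a,b)$, $a\in\mathbb{Z}/n$ (represented in $\{1,\dots,n\}$), $b\ge1$ the quasilength, with $\tau(a,b)=(a-1,b)$ and irreducible maps $(a,b)\to(a,b+1)$, $(a,b)\to(a+1,b-1)$. For indecomposables $X,Y$, $\operatorname{Hom}_{\mathcal{C}_n}(X,Y)=\operatorname{Hom}_{\mathcal{T}_n}(X,Y)\oplus\operatorname{Hom}_{D^b}(X,\tau^{-1}Y[1])$; elements of the first summand are $\mathcal{T}$-maps, of the second $\mathcal{D}$-maps. $R^{\mathcal{T}}(X)$ (resp. $R^{\mathcal{D}}(X)$) is the set of indecomposables with a nonzero $\mathcal{T}$-map (resp. $\mathcal{D}$-map) to $X$. Wing of $X=(a,i)$, $i\le n-1$: $\{(a+s,i'):s\ge0,i'\ge1,s+i'\le i\}$. $T=\bigoplus_{i=1}^{n-1}T_i$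 is basic maximal rigid ($\operatorname{Ext}^1(T,T)=0$ and $\operatorname{Ext}^1(T\oplus Z,T\oplus Z)=0\Rightarrow Z\in\operatorname{add}T$); its unique summand of quasilength $n-1$ (top summand) is, by choice of coordinates, $T_1=(1,n-1)$. $\mathcal{F}$ is the set of indecomposables $(a,b)$, $a\in\{1,\dots,n\}$, with $b\le n-1$ or $a+b\le2n-1$. The quiver of $\Lambda_T=\operatorname{End}_{\mathcal{C}_n}(T)^{\mathrm{op}}$ has a vertex for each $T_i$ and arrows $i\to j$ for maps $T_j\to T_i$ irreducible in $\operatorname{add}T$. A string is a trivial string at a vertex, or a word in arrows and formal inverses with matching endpoints, no letter followed by its inverse, and no subword of it or its inverse a zero relation of $\Lambda_T$. For $*\in\{\mathcal{T},\mathcal{D}\}$: if $R^*(X)\cap\operatorname{add}T\neq\emptyset$, $\sigma^*_X$ denotes the unique string that traverses exactly the vertices of the summands of $T$ in $R^*(X)$, each exactly once, and ends at the vertex of the one of highest quasilength; otherwise $\sigma^*_X$ is the zero string. *)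

From mathcomp Require Import all_boot.
Set Implicit Arguments. Unset Strict Implicit. Unset Printing Implicit Defensive.

(** * Indecomposables of the tube / cluster tube
    An indecomposable is a pair (a, b): a in {1..n} (representative of Z/n),
    b >= 1 the quasilength.  (a,b) is the uniserial nilpotent representation
    whose composition factors, from the socle up, are the simples
    a, a+1, ..., a+b-1 (mod n); then (a,b) -> (a,b+1) is the irreducible
    mono, (a,b) -> (a+1,b-1) the irreducible epi, and tau (a,b) = (a-1,b). *)
Definition obj := (nat * nat)%type.

Definition valid (n : nat) (X : obj) : bool := (0 < X.1 <= n) && (0 < X.2).
Definition qlen (X : obj) : nat := X.2.

Definition tau (n : nat) (X : obj) : obj := (if X.1 == 1 then n else X.1.-1, X.2).

(** Basis of Hom_T(X,Y): a nonzero map (a,b) -> (c,d) is determined (up to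
    scalar) by the length l of its image, which is a quotient (a+b-l, l) of X
    and a submodule (c, l) of Y. *)
Definition tbasis (n : nat) (X Y : obj) : seq nat :=
  [seq l <- iota 1 (minn X.2 Y.2) | X.1 + X.2 - l == Y.1 %[mod n]].

Definition homT (n : nat) (X Y : obj) : bool := tbasis n X Y != [::].

(** D-maps X -> Y are elements of Hom_D(X, tau^-1 Y [1]) = Ext^1_T(X, tau^-1 Y)
    = D Hom_T(tau^-1 Y, tau X) = D Hom_T(Y, tau^2 X) (AR duality); the basis is the
    dual of the basis of Hom_T(Y, tau^2 X). *)
Definition dbasis (n : nat) (X Y : obj) : seq nat := tbasis n Y (tau n (tau n X)).

Definition homD (n : nat) (X Y : obj) : bool := dbasis n X Y != [::].

Definition RT (n : nat) (X : obj) : pred obj := fun Z => homT n Z X.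
Definition RD (n : nat) (X : obj) : pred obj := fun Z => homD n Z X.

(** Ext^1_{C_n}(X,Y) = Hom_{C_n}(X, Y[1]) and Y[1] = tau Y in C_n. *)
Definition extC (n : nat) (X Y : obj) : bool := homT n X (tau n Y) || homD n X (tau n Y).

Definition rigid (n : nat) (T : seq obj) : bool :=
  all (fun A => all (fun B => ~~ extC n A B) T) T.

Definition maximal_rigid (n : nat) (T : seq obj) : Prop :=
  rigid n T /\ (forall Z : obj, valid n Z -> rigid n (Z :: T) -> Z \in T).

Definition inF (n : nat) (X : obj) : bool :=
  valid n X && ((X.2 <= n - 1) || (X.1 + X.2 <= 2 * n - 1)).

(** An element (false, l) is the T-map with image length l, (true, h) the
    D-map dual to the basis element h of Hom_T(Y, tau^2 X).
    Composition of basis elements is (a nonzero multiple of) a basis element or 0;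
    [comp n X Y Z g f] is g \o f for f : X -> Y, g : Y -> Z (None = zero). *)
Definition elt := (bool * nat)%type.

Definition basis (n : nat) (X Y : obj) : seq elt :=
  [seq (false, l) | l <- tbasis n X Y] ++ [seq (true, l) | l <- dbasis n X Y].

Definition comp (n : nat) (X Y Z : obj) (g f : elt) : option elt :=
  match f, g with
  | (false, l), (false, m) =>
      if (Y.2 < l + m) && (l + m - Y.2 \in tbasis n X Z)
      then Some (false, l + m - Y.2) else None
  | (true, h), (false, m) =>
      (* F(g) o delta_h = delta_q, where phi_q o g_m = phi_h *)
      let q := h + Z.2 - m in
      if q \in dbasis n X Z then Some (true, q) else None
  | (false, l), (true, h) =>
      (* delta_h o f_l = delta_q, where tau^2 f_l o psi_q = psi_h *)
      let q := h + X.2 - l in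
      if q \in dbasis n X Z then Some (true, q) else None
  | (true, _), (true, _) => None
  end.

(** Radical basis: all basis elements, except the identity (false, qlen X)
    of an endomorphism ring. *)
Definition radb (n : nat) (X Y : obj) : seq elt :=
  [seq e <- basis n X Y | (X != Y) || (e != (false, X.2))].

Definition rad2 (n : nat) (T : seq obj) (X Y : obj) (e : elt) : bool :=
  has (fun Z => has (fun f => has (fun g => comp n X Z Y g f == Some e)
                                  (radb n Z Y))
                     (radb n X Z)) T.

(** An arrow (i, j, e) : i -> j is given by a basis element e : T_j -> T_i which
    is irreducible in add T (i.e. in rad, not in rad^2 of add T); vertices are
    named by the summands themselves. *)
Definition arrow := (obj * obj * elt)%type.

Definition is_arrow (n : nat) (T : seq obj) (a : arrow) : bool :=
  let: (i, j, e) := a in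
  [&& i \in T, j \in T, e \in radb n j i & ~~ rad2 n T j i e].

(** Map of Lambda_T associated with a path a_1 a_2 ... a_k
    (a_t : v_(t-1) -> v_t): the composite T_(v_k) -> T_(v_0); result is
    (source, target, element), None if zero. *)
Fixpoint path_map (n : nat) (p : seq arrow) : option (obj * obj * elt) :=
  match p with
  | [::] => None
  | [:: a] => let: (i, j, e) := a in Some (j, i, e)
  | a :: p' =>
      let: (i, j, e) := a in
      match path_map n p' with
      | Some (s, _, f) =>
          match comp n s j i e f with
          | Some g => Some (s, i, g)
          | None => None
          end
      | None => None
      end
  end.

Definition zero_rel (n : nat) (p : seq arrow) : bool :=
  (1 < size p) && (path_map n p == None).

(** A letter is an arrow with a direction (true = the arrow,
    false = its formal inverse).  A string is represented as a walk: a starting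
    vertex together with the sequence of letters read from the start to the
    end of the string; the trivial string at v is (v, [::]). *)
Definition letter := (arrow * bool)%type.

Definition l_from (L : letter) : obj := let: (i, j, _, d) := L in if d then i else j.
Definition l_to (L : letter) : obj := let: (i, j, _, d) := L in if d then j else i.

Fixpoint consistent (v : obj) (ls : seq letter) : bool :=
  match ls with
  | [::] => true
  | L :: ls' => (l_from L == v) && consistent (l_to L) ls'
  end.

Definition no_backtrack (ls : seq letter) : bool :=
  all (fun p : letter * letter => ~~ ((p.1.1 == p.2.1) && (p.1.2 != p.2.2)))
      (zip ls (behead ls)).

Definition no_zero_rel (n : nat) (ls : seq letter) : bool :=
  all (fun i => all (fun k =>
         let sub := take k (drop i ls) in
         [&& (all (fun L : letter => L.2) sub ==> ~~ zero_rel n (map fst sub))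
           & (all (fun L : letter => ~~ L.2) sub ==> ~~ zero_rel n (rev (map fst sub)))])
       (iota 0 (size ls).+1))
      (iota 0 (size ls).+1).

Definition str := (obj * seq letter)%type.

Definition is_string (n : nat) (T : seq obj) (s : str) : bool :=
  let: (v, ls) := s in
  [&& v \in T, all (fun L : letter => is_arrow n T L.1) ls, consistent v ls,
      no_backtrack ls & no_zero_rel n ls].

Definition walk (s : str) : seq obj := s.1 :: map l_to s.2.
Definition str_end (s : str) : obj := last s.1 (map l_to s.2).

(** sigma^*_X (with R = RT or RD): None is the zero string; otherwise a string
    traversing exactly the summands of T in R^*(X), each once, and ending at
    the one of highest quasilength. *)
Definition is_sigma (n : nat) (T : seq obj) (R : nat -> obj -> pred obj) (X : obj)
    (s : option str) : Prop :=
  let S := [seq t <- T | R n X t] in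
  if S == [::] then s = None
  else exists w : str,
      [/\ s = Some w, is_string n T w, uniq (walk w), walk w =i S
        & forall u, u \in S -> qlen u <= qlen (str_end w)].

From mathcomp Require Import all_boot zify.
Set Implicit Arguments. Unset Strict Implicit. Unset Printing Implicit Defensive.

(* Read a summand (c, d) of T as the interval [c, c + d).  Rigidity against T_1 = (1, n - 1)
   puts every summand inside [1, n), and rigidity between summands makes any two of them
   nested or separated by a gap.  Maximality makes this family complete: each p in [1, n - 1]
   has a smallest covering summand t_p, and the parts of t_p left and right of p are summands
   again.  For X = (a, b) in F, the summands in R^T(X) are those covering a and ending by
   a + b, those in R^D(X) the ones covering a + b + 1 (mod n) and starting after a + 1.  Equal
   strings visit equal sets of vertices, so X and Y meet T in the same way; testing t_a,
   t_(a+b+1) and T_1 against these sets recovers a and a + b.  The reading only fails when a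
   side of some t_p is tau^-1 X, which the hypothesis X \notin add tau T excludes. *)

(* The three alternatives are the three representatives y1, y1 + n, y1 - n of the start
   of the image modulo n. *)
Lemma homT_iff n x1 x2 y1 y2 : 0 < n -> 0 < x2 -> 0 < y2 -> x1 + x2 <= 2 * n -> y1 <= n ->
  homT n (x1, x2) (y1, y2) <->
  ((x1 + x2 - minn x2 y2 <= y1 /\ y1 <= x1 + x2 - 1) \/
   (x1 + x2 - minn x2 y2 <= y1 + n /\ y1 + n <= x1 + x2 - 1) \/
   (x1 + x2 - minn x2 y2 + n <= y1 /\ y1 <= x1 + x2 - 1 + n)).
Proof.
move=> n0 x20 y20 hx hy; rewrite /homT /tbasis -has_filter /=; split.
- case/hasP=> l; rewrite mem_iota => /andP[l1 l2] /=.
  set u := x1 + x2 - l => hm.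
  have hu : u < 2 * n by rewrite /u; lia.
  case: (leqP y1 u) => hyu.
  + move: hm; rewrite eqn_mod_dvd // => /dvdnP [k hk].
    have : k < 2 by nia.
    case: k hk => [|[|k]] hk _ //; try lia.
  + move: hm; rewrite eq_sym eqn_mod_dvd ?(ltnW hyu) // => /dvdnP [k hk].
    have : k < 2 by nia.
    case: k hk => [|[|k]] hk _ //; try lia.
- move=> H; apply/hasP.
  case: H => [[h1 h2]|[[h1 h2]|[h1 h2]]].
  + exists (x1 + x2 - y1); first by rewrite mem_iota; lia.
    by rewrite /= (_ : x1 + x2 - (x1 + x2 - y1) = y1) //; lia.
  + exists (x1 + x2 - (y1 + n)); first by rewrite mem_iota; lia.
    by rewrite /= (_ : x1 + x2 - (x1 + x2 - (y1 + n)) = y1 + n) ?modnDr //; lia.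
  + exists (x1 + x2 + n - y1); first by rewrite mem_iota; lia.
    apply/eqP; rewrite -(modnDr _ n); congr (_ %% _); lia.
Qed.

Definition in_wing n (t : obj) := 1 <= t.1 /\ 1 <= t.2 /\ t.1 + t.2 <= n.

Definition inF_bounds n (X : obj) := 1 <= X.1 <= n /\ 1 <= X.2 /\ X.1 + X.2 <= 2 * n - 1.

Lemma inF_boundsP n X : inF n X -> inF_bounds n X.
Proof. by case: X => a b; rewrite /inF /valid /inF_bounds /=; lia. Qed.

(* Indecomposables (c, d) are identified with the integer intervals [c, c + d). *)
Definition covers (t : obj) p := t.1 <= p < t.1 + t.2.

Definition subinterval (t t' : obj) := t'.1 <= t.1 /\ t.1 + t.2 <= t'.1 + t'.2.

Definition compatible (t t' : obj) :=
  subinterval t t' \/ subinterval t' t \/ t.1 + t.2 < t'.1 \/ t'.1 + t'.2 < t.1.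

Lemma compatible_sym t t' : compatible t t' -> compatible t' t.
Proof. by rewrite /compatible /subinterval; lia. Qed.

Definition RT_wing (X t : obj) := covers t X.1 /\ t.1 + t.2 <= X.1 + X.2.

(* The second alternative is the first one wrapped around modulo n. *)
Definition RD_wing n (X t : obj) :=
  (X.1 + 2 <= t.1 /\ covers t (X.1 + X.2 + 1)) \/
  (X.1 + 2 <= t.1 + n /\ covers t (X.1 + X.2 + 1 - n) /\ X.1 + X.2 + 1 >= n).

Lemma RT_wingE n X t : 2 <= n -> in_wing n t -> inF_bounds n X -> RT n X t <-> RT_wing X t.
Proof.
case: X => a b; case: t => c d; rewrite /in_wing /inF_bounds /RT /RT_wing /covers /= => n2 ht hX.
by rewrite homT_iff; lia.
Qed.

Lemma RD_wingE n X t : 2 <= n -> in_wing n t -> inF_bounds n X -> RD n X t <-> RD_wing n X t.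
Proof.
case: X => a b; case: t => c d.
rewrite /in_wing /inF_bounds /RD /RD_wing /covers /homD /dbasis -/(homT _ _ _) /tau /=.
move=> n2 ht hX; have n1 : (n == 1) = false by apply/negbTE; lia.
by case: (c =P 1) => [->|c1] /=; rewrite ?n1; last case: (c.-1 =P 1) => /=;
  rewrite homT_iff; lia.
Qed.

Lemma compatible_no_ext n A B : 2 <= n -> in_wing n A -> in_wing n B ->
  compatible A B -> ~~ extC n A B.
Proof.
case: A => c d; case: B => c' d'.
rewrite /in_wing /compatible /subinterval /extC /homD /dbasis -!/(homT _ _ _) /tau /=.
move=> n2 hA hB hAB; have n1 : (n == 1) = false by apply/negbTE; lia.
rewrite negb_or; apply/andP; split; apply/negP.
- by case: (c' =P 1) => ? /=; rewrite homT_iff; lia.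
- by case: (c' =P 1) => ? /=; case: (c =P 1) => ? /=; rewrite ?n1 /=;
    try case: (c.-1 =P 1) => ? /=; rewrite homT_iff; lia.
Qed.

Lemma crossing_ext n A B : 2 <= n -> in_wing n A -> in_wing n B ->
  A.1 < B.1 <= A.1 + A.2 -> A.1 + A.2 < B.1 + B.2 -> extC n A B.
Proof.
case: A => c d; case: B => c' d'; rewrite /in_wing /extC /tau /= => n2 hA hB h1 h2.
rewrite (_ : (c' == 1) = false) /=; last by apply/negbTE; lia.
by apply/orP; left; rewrite homT_iff; lia.
Qed.

Lemma no_ext_compatible n A B : 2 <= n -> in_wing n A -> in_wing n B ->
  ~~ extC n A B -> ~~ extC n B A -> compatible A B.
Proof.
move=> n2 hA hB hAB hBA; rewrite /compatible /subinterval.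
case: (boolP (A.1 < B.1 <= A.1 + A.2)) => AB.
  by case: (ltnP (A.1 + A.2) (B.1 + B.2)) => h; [rewrite crossing_ext in hAB | lia].
case: (boolP (B.1 < A.1 <= B.1 + B.2)) => BA.
  by case: (ltnP (B.1 + B.2) (A.1 + A.2)) => h; [rewrite crossing_ext in hBA | lia].
by move: hA hB; rewrite /in_wing; lia.
Qed.

Lemma rigid_qlen n t : 2 <= n -> valid n t -> ~~ extC n t t -> t.2 <= n - 1.
Proof.
case: t => c d; rewrite /valid /extC /= => n2 /andP[/andP[c0 cn] d0].
rewrite negb_or => /andP[/negP h _].
case: (leqP d (n - 1)) => // dn; exfalso; apply: h.
rewrite /homT /tbasis -has_filter; apply/hasP; exists (d - n + 1).
  by rewrite mem_iota /tau /=; lia.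
rewrite /tau /=; case: (c =P 1) => [->|c1] /=.
  by rewrite (_ : 1 + d - (d - n + 1) = n) //; lia.
by rewrite (_ : c + d - (d - n + 1) = c.-1 + n) ?modnDr //; lia.
Qed.

Lemma in_wing_of_rigid n t : 2 <= n -> valid n t -> ~~ extC n t t ->
  ~~ extC n t (1, n - 1) -> in_wing n t.
Proof.
move=> n2 vt /(rigid_qlen n2 vt); move: vt.
case: t => c d; rewrite /valid /in_wing /extC /tau /= => /andP[/andP[c0 cn] d0] dn.
rewrite negb_or => /andP[/negP h _].
by case: (leqP (c + d) n) => // cd; exfalso; apply: h; rewrite homT_iff; lia.
Qed.

Lemma rigid_no_ext n T A B : rigid n T -> A \in T -> B \in T -> ~~ extC n A B.
Proof. by move=> /allP /(_ A) h hA hB; move: (h hA) => /allP /(_ B hB). Qed.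

(* The last two fields: the parts of [t] left and right of [p] are summands when nonempty. *)
Definition min_cover (T : seq obj) p (t : obj) :=
  [/\ t \in T, covers t p, (forall t' : obj, t' \in T -> covers t' p -> subinterval t t'),
      t.1 < p -> (t.1, p - t.1) \in T &
      p + 1 < t.1 + t.2 -> (p + 1, t.1 + t.2 - 1 - p) \in T].

Section MaximalRigidInWing.

Variables (n : nat) (T : seq obj).
Hypotheses (n_ge2 : 2 <= n) (validT : all (valid n) T) (maxT : maximal_rigid n T)
  (topT : (1, n - 1) \in T).

Lemma summand_in_wing (t : obj) : t \in T -> in_wing n t.
Proof.
have rT := maxT.1; move=> ht.
apply: in_wing_of_rigid => //; first exact: (allP validT).
  exact: (rigid_no_ext rT ht ht).
exact: (rigid_no_ext rT ht topT).
Qed.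

Lemma summands_compatible (t t' : obj) : t \in T -> t' \in T -> compatible t t'.
Proof.
have rT := maxT.1; move=> ht ht'.
by apply: no_ext_compatible (summand_in_wing ht) (summand_in_wing ht')
  (rigid_no_ext rT ht ht') (rigid_no_ext rT ht' ht).
Qed.

Lemma compatible_mem (Z : obj) :
  in_wing n Z -> (forall t : obj, t \in T -> compatible Z t) -> Z \in T.
Proof.
move=> wZ cZ; case: maxT => rT mT; apply: mT; first by move: wZ; rewrite /in_wing /valid; lia.
have no_ext (A B : obj) : A \in Z :: T -> B \in Z :: T -> ~~ extC n A B.
  rewrite !inE => /predU1P[-> | hA] /predU1P[-> | hB].
  - by apply: compatible_no_ext => //; rewrite /compatible /subinterval; lia.
  - by apply: compatible_no_ext (summand_in_wing hB) (cZ B hB).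
  - by apply: compatible_no_ext (summand_in_wing hA) _ (compatible_sym (cZ A hA)).
  - exact: rigid_no_ext rT hA hB.
by apply/allP => A hA; apply/allP => B hB; apply: no_ext.
Qed.

Lemma min_cover_of_min_qlen p (t : obj) : p <= n - 1 -> t \in T -> covers t p ->
  (forall t' : obj, t' \in T -> covers t' p -> t.2 <= t'.2) -> min_cover T p t.
Proof.
move=> pn ht ctp tmin; have wt := summand_in_wing ht.
have sub_t (t' : obj) : t' \in T -> covers t' p -> subinterval t t'.
  move=> ht' ct'p; have := tmin _ ht' ct'p; have := summands_compatible ht ht'.
  by move: ct'p ctp; rewrite /compatible /covers /subinterval; lia.
(* A side of [t] is compatible with every summand: those covering [p] contain [t],
   the others lie on one side of [p] or outside [t]. *)
split=> // side; apply: compatible_mem; try by move: wt ctp side; rewrite /in_wing /covers /=; lia.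
all: move=> t' ht'; have := summands_compatible ht ht'.
all: case: (boolP (covers t' p)) => [/(sub_t _ ht') | ] ct'p.
all: by move: ctp side ct'p wt; rewrite /compatible /subinterval /covers /in_wing /=; lia.
Qed.

Lemma exists_min_cover p : 1 <= p -> p <= n - 1 -> exists t : obj, min_cover T p t.
Proof.
move=> p1 pn; pose P k := has (fun t : obj => covers t p && (t.2 == k)) T.
have exP : exists k, P k.
  by exists (n - 1); apply/hasP; exists (1, n - 1) => //; rewrite /covers /=; lia.
case: (ex_minnP exP) => k /hasP [t ht /andP [ctp /eqP tk]] kmin.
exists t; apply: min_cover_of_min_qlen => //.
move=> t' ht' ct'p; rewrite tk; apply: kmin; apply/hasP; exists t' => //.
by rewrite ct'p /=.
Qed.

End MaximalRigidInWing.

Lemma min_cover_eq T p q (tp tq : obj) : min_cover T p tp -> min_cover T q tq ->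
  covers tp q -> covers tq p -> p = q.
Proof.
wlog pq : p q tp tq / p <= q => [sym Hp Hq cpq cqp | [_ cp _ _ rp] [_ cq mq _ _] cpq cqp].
  by case: (leqP p q) => [h | /ltnW h]; [exact: sym Hp Hq cpq cqp | exact/esym/(sym q p tq tp)].
move: pq; rewrite leq_eqVlt => /predU1P[-> // | pq]; exfalso.
have R : (p + 1, tp.1 + tp.2 - 1 - p) \in T by apply: rp; move: cpq cp; rewrite /covers; lia.
by have := mq _ R; move: cpq cqp cp cq; rewrite /covers /subinterval /=; lia.
Qed.

(* Arithmetic form of [X \notin map (tau n) T]. *)
Definition avoids_tau n (T : seq obj) (X : obj) := forall t : obj, t \in T -> X.2 = t.2 ->
  (t.1 = 1 -> X.1 <> n) /\ (2 <= t.1 -> X.1 + 1 <> t.1).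

Definition same_traces n (T : seq obj) (X Y : obj) :=
  (forall t : obj, t \in T -> RT_wing X t <-> RT_wing Y t) /\
  (forall t : obj, t \in T -> RD_wing n X t <-> RD_wing n Y t).

Lemma same_traces_sym n T X Y : same_traces n T X Y -> same_traces n T Y X.
Proof. by case=> sT sD; split=> t ht; [rewrite sT | rewrite sD]. Qed.

Section Separation.

Variables (n : nat) (T : seq obj).
Hypotheses (n_ge2 : 2 <= n) (wingT : forall t : obj, t \in T -> in_wing n t)
  (topT : (1, n - 1) \in T)
  (min_coverT : forall p, 1 <= p -> p <= n - 1 -> exists t : obj, min_cover T p t).

(* Objects (a, b) of F fall into region I (a + b <= n - 1), III (a <= n - 1 < a + b) or
   IV (a = n); T_1 lies in R^T(a, b) exactly in region III. *)
Lemma same_traces_regionIII_start a b a' b' : inF_bounds n (a, b) -> inF_bounds n (a', b') ->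
  same_traces n T (a, b) (a', b') -> a <= n - 1 -> n <= a + b -> a = a' /\ n <= a' + b'.
Proof.
rewrite /inF_bounds /= => hX hY [sT _] an nab.
have hY3 : a' <= n - 1 /\ n <= a' + b'.
  by have := sT _ topT; rewrite /RT_wing /covers /=; lia.
split; last by case: hY3.
have [ta Hta] := min_coverT (p := a) ltac:(lia) ltac:(lia).
have [ta' Hta'] := min_coverT (p := a') ltac:(lia) ltac:(lia).
have [hta cta mta _ _] := Hta; have [hta' cta' mta' _ _] := Hta'.
have s := mta _ topT ltac:(rewrite /covers /=; lia).
have s' := mta' _ topT ltac:(rewrite /covers /=; lia).
apply: (min_cover_eq Hta Hta').
- by have := sT _ hta; move: cta s; rewrite /RT_wing /covers /subinterval /=; lia.
- by have := sT _ hta'; move: cta' s'; rewrite /RT_wing /covers /subinterval /=; lia.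
Qed.

Lemma same_traces_regionIII_end a b b' : inF_bounds n (a, b) -> inF_bounds n (a, b') ->
  same_traces n T (a, b) (a, b') -> a <= n - 1 -> n <= a + b -> n <= a + b' -> b = b'.
Proof.
rewrite /inF_bounds /= => hX hY [_ sD] an nab nab'.
have top_end : (a + b <= 2 * n - 2) = (a + b' <= 2 * n - 2).
  by have := sD _ topT; rewrite /RD_wing /covers /=; lia.
case: (leqP (a + b) (2 * n - 2)) top_end => ab ab'; last by lia.
have [tq Htq] := min_coverT (p := a + b + 1 - n) ltac:(lia) ltac:(lia).
have [tq' Htq'] := min_coverT (p := a + b' + 1 - n) ltac:(lia) ltac:(lia).
have [hq cq _ _ _] := Htq; have [hq' cq' _ _ _] := Htq'.
suff : a + b + 1 - n = a + b' + 1 - n by lia.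
apply: (min_cover_eq Htq Htq').
- by have := sD _ hq; have := wingT hq; move: cq; rewrite /RD_wing /covers /in_wing /=; lia.
- by have := sD _ hq'; have := wingT hq'; move: cq'; rewrite /RD_wing /covers /in_wing /=; lia.
Qed.

Lemma same_traces_regionIII X Y : inF_bounds n X -> inF_bounds n Y -> same_traces n T X Y ->
  X.1 <= n - 1 -> n <= X.1 + X.2 -> X = Y.
Proof.
case: X Y => a b [a' b'] /= hX hY S an nab.
have [ea nab'] := same_traces_regionIII_start hX hY S an nab; subst a'.
by rewrite (same_traces_regionIII_end hX hY S an nab nab').
Qed.

Lemma min_cover_right_child a b (ta : obj) : inF_bounds n (a, b) -> avoids_tau n T (a, b) ->
  min_cover T a ta -> ~ RT_wing (a, b) ta ->
  exists2 R : obj, R \in T & R.1 = a + 1 /\ a + b + 2 <= R.1 + R.2.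
Proof.
rewrite /inF_bounds /= => hX avX [hta cta _ _ rta] nRT; have wta := wingT hta.
have R_in : (a + 1, ta.1 + ta.2 - 1 - a) \in T.
  by apply: rta; move: nRT cta wta; rewrite /RT_wing /covers /in_wing /=; lia.
exists (a + 1, ta.1 + ta.2 - 1 - a) => //=.
by have := avX _ R_in; move: nRT cta wta; rewrite /RT_wing /covers /in_wing /=; lia.
Qed.

Lemma min_cover_start_neq a b (t : obj) : inF_bounds n (a, b) -> avoids_tau n T (a, b) ->
  min_cover T (a + b + 1) t -> t.1 <> a + 1.
Proof.
rewrite /inF_bounds /= => hX avX [_ _ _ lt _] ta.
have := lt ltac:(lia); rewrite ta (_ : a + b + 1 - (a + 1) = b); last by lia.
by move=> /avX; rewrite /=; lia.
Qed.

Lemma regionIV_RD_min_cover b : inF_bounds n (n, b) -> avoids_tau n T (n, b) ->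
  exists2 t : obj, min_cover T (b + 1) t & RD_wing n (n, b) t.
Proof.
rewrite /inF_bounds /= => hX avX.
have bn : b + 1 <= n - 1 by have := avX _ topT; rewrite /=; lia.
have [t Ht] := min_coverT (p := b + 1) ltac:(lia) bn.
exists t => //; have [ht ct _ lt _] := Ht; have wt := wingT ht.
case: (leqP 2 t.1) => t2; first by move: ct wt; rewrite /RD_wing /covers /in_wing /=; lia.
have L : (t.1, b + 1 - t.1) \in T by apply: lt; lia.
by have := avX _ L; move: wt; rewrite /in_wing /=; lia.
Qed.

Lemma regionI_RD_min_cover a b (ta : obj) : inF_bounds n (a, b) -> a + b <= n - 1 ->
  avoids_tau n T (a, b) -> min_cover T a ta -> ~ RT_wing (a, b) ta ->
  exists2 t : obj, min_cover T (a + b + 1) t & RD_wing n (a, b) t.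
Proof.
move=> hX abn avX Hta nRT; have [R hR [R1 R2]] := min_cover_right_child hX avX Hta nRT.
have wR := wingT hR; move: hX wR; rewrite /inF_bounds /in_wing /= => hX wR.
have [t Ht] := min_coverT (p := a + b + 1) ltac:(lia) ltac:(lia).
exists t => //; have [ht ct mt _ _] := Ht.
have := min_cover_start_neq hX avX Ht; have := mt _ hR ltac:(rewrite /covers; lia).
by move: ct; rewrite /RD_wing /covers /subinterval /=; lia.
Qed.

Lemma same_traces_not_IV_I b a' b' : inF_bounds n (n, b) -> avoids_tau n T (n, b) ->
  inF_bounds n (a', b') -> a' + b' <= n - 1 -> avoids_tau n T (a', b') ->
  ~ same_traces n T (n, b) (a', b').
Proof.
move=> hX avX hY abn avY [sT sD].
have [t Ht RDXt] := regionIV_RD_min_cover hX avX.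
have [ht ct _ _ _] := Ht; have wt := wingT ht; have RDYt := (sD _ ht).1 RDXt.
move: hX hY wt RDYt; rewrite /inF_bounds /in_wing /RD_wing /covers /= => hX hY wt RDYt.
have [t' Ht'] := min_coverT (p := a' + b' + 1) ltac:(lia) ltac:(lia).
have [ht' ct' mt' _ _] := Ht'; have wt' := wingT ht'.
have eb : b = a' + b'.
  suff : b + 1 = a' + b' + 1 by lia.
  apply: (min_cover_eq Ht Ht'); first by rewrite /covers; lia.
  have := mt' _ ht ltac:(rewrite /covers; lia); have := sD _ ht'.
  by move: ct' wt'; rewrite /RD_wing /subinterval /covers /in_wing /=; lia.
(* R^T(n, b) contains no summand, so the right side of t_(a') exists; it lies in R^D(n, b)
   but not in R^D(a', b'). *)
have [ta' Hta'] := min_coverT (p := a') ltac:(lia) ltac:(lia).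
have [hta' _ _ _ _] := Hta'; have wta' := wingT hta'.
have nRT : ~ RT_wing (a', b') ta'.
  by move=> /(sT _ hta').2; move: wta'; rewrite /RT_wing /covers /in_wing /=; lia.
have [R hR [R1 R2]] := min_cover_right_child hY avY Hta' nRT.
by have := sD _ hR; have := wingT hR; rewrite /RD_wing /covers /in_wing /=; lia.
Qed.

Lemma same_traces_regionI_qlen a b b' : inF_bounds n (a, b) -> inF_bounds n (a, b') ->
  a + b' <= n - 1 -> avoids_tau n T (a, b) -> same_traces n T (a, b) (a, b') -> ~ b < b'.
Proof.
move=> hX hY abn avX [sT sD] bb'.
have neq := min_cover_start_neq hX avX; move: hX hY; rewrite /inF_bounds /= => hX hY.
have [t Ht] := min_coverT (p := a + b + 1) ltac:(lia) ltac:(lia).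
have [ht ct _ lt _] := Ht; have wt := wingT ht; have t_a1 := neq _ Ht.
case: (leqP (a + 2) t.1) => t_a2.
  have RDYt : RD_wing n (a, b') t.
    by apply/(sD _ ht); move: ct wt; rewrite /RD_wing /covers /in_wing /=; lia.
  move: wt RDYt; rewrite /in_wing /RD_wing /covers /= => wt RDYt.
  have [t' Ht'] := min_coverT (p := a + b' + 1) ltac:(lia) ltac:(lia).
  have [ht' ct' mt' _ _] := Ht'; have wt' := wingT ht'.
  suff : a + b + 1 = a + b' + 1 by lia.
  apply: (min_cover_eq Ht Ht'); first by rewrite /covers; lia.
  have := mt' _ ht ltac:(rewrite /covers; lia); have := sD _ ht'.
  by move: ct' wt'; rewrite /RD_wing /subinterval /covers /in_wing /=; lia.
have L : (t.1, a + b + 1 - t.1) \in T by apply: lt; lia.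
have := sT _ L; move: ct; rewrite /RT_wing /covers /=; lia.
Qed.

Lemma same_traces_regionI_start a b a' b' (ta' : obj) : inF_bounds n (a, b) ->
  inF_bounds n (a', b') -> a + b = a' + b' -> a' + b' <= n - 1 -> avoids_tau n T (a', b') ->
  same_traces n T (a, b) (a', b') -> min_cover T a' ta' -> ~ RT_wing (a', b') ta' -> ~ a < a'.
Proof.
move=> hX hY e abn avY [_ sD] Hta' nRT aa'.
have [R hR [R1 R2]] := min_cover_right_child hY avY Hta' nRT.
have := sD _ hR; have := wingT hR; move: hX hY.
by rewrite /inF_bounds /RD_wing /covers /in_wing /=; lia.
Qed.

Lemma same_traces_regionI_RT a b a' b' (ta ta' : obj) : inF_bounds n (a, b) ->
  inF_bounds n (a', b') -> same_traces n T (a, b) (a', b') -> min_cover T a ta ->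
  min_cover T a' ta' -> RT_wing (a, b) ta -> a = a' /\ RT_wing (a', b') ta'.
Proof.
move=> hX hY [sT _] Hta Hta' RTXta.
have [hta cta _ _ _] := Hta; have [hta' cta' mta' _ _] := Hta'.
have RTYta := (sT _ hta).1 RTXta.
have RTYta' : RT_wing (a', b') ta'.
  have := mta' _ hta ltac:(move: RTYta; rewrite /RT_wing /covers /=; lia).
  by move: cta' RTYta; rewrite /RT_wing /covers /subinterval /=; lia.
split=> //; apply: (min_cover_eq Hta Hta'); first by case: RTYta.
by case: ((sT _ hta').2 RTYta').
Qed.

Lemma same_traces_regionI a b a' b' : inF_bounds n (a, b) -> inF_bounds n (a', b') ->
  a + b <= n - 1 -> a' + b' <= n - 1 -> avoids_tau n T (a, b) -> avoids_tau n T (a', b') ->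
  same_traces n T (a, b) (a', b') -> (a, b) = (a', b').
Proof.
move=> hX hY abn abn' avX avY S; have S' := same_traces_sym S; have [_ sD] := S.
have [ta Hta] := min_coverT (p := a) ltac:(by case: hX => /andP[]) ltac:(lia).
have [ta' Hta'] := min_coverT (p := a') ltac:(by case: hY => /andP[]) ltac:(lia).
have [RTXta | nRTX] : RT_wing (a, b) ta \/ ~ RT_wing (a, b) ta by rewrite /RT_wing /covers; lia.
  have [ea _] := same_traces_regionI_RT hX hY S Hta Hta' RTXta; subst a'.
  case: (ltngtP b b') => [bb' | b'b | -> //].
  - by case: (same_traces_regionI_qlen hX hY abn' avX S bb').
  - by case: (same_traces_regionI_qlen hY hX abn avY S' b'b).
have nRTY : ~ RT_wing (a', b') ta' by case/(same_traces_regionI_RT hY hX S' Hta' Hta).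
have [t Ht RDXt] := regionI_RD_min_cover hX abn avX Hta nRTX.
have [t' Ht' RDYt'] := regionI_RD_min_cover hY abn' avY Hta' nRTY.
have e : a + b = a' + b'.
  suff : a + b + 1 = a' + b' + 1 by lia.
  have [ht _ _ _ _] := Ht; have [ht' _ _ _ _] := Ht'.
  apply: (min_cover_eq Ht Ht').
  - have := (sD _ ht).1 RDXt; have := wingT ht; move: hY.
    by rewrite /inF_bounds /RD_wing /covers /in_wing /=; lia.
  - have := (sD _ ht').2 RDYt'; have := wingT ht'; move: hX.
    by rewrite /inF_bounds /RD_wing /covers /in_wing /=; lia.
case: (ltngtP a a') => [aa' | a'a | ea].
- by case: (same_traces_regionI_start hX hY e abn' avY S Hta' nRTY aa').
- by case: (same_traces_regionI_start hY hX (esym e) abn avX S' Hta nRTX a'a).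
- by congr pair; lia.
Qed.

Lemma same_traces_regionIV b b' : inF_bounds n (n, b) -> inF_bounds n (n, b') ->
  avoids_tau n T (n, b) -> avoids_tau n T (n, b') -> same_traces n T (n, b) (n, b') -> b = b'.
Proof.
move=> hX hY avX avY [_ sD].
have [t Ht RDXt] := regionIV_RD_min_cover hX avX.
have [t' Ht' RDYt'] := regionIV_RD_min_cover hY avY.
have [ht _ _ _ _] := Ht; have [ht' _ _ _ _] := Ht'.
suff : b + 1 = b' + 1 by lia.
apply: (min_cover_eq Ht Ht').
- have := (sD _ ht).1 RDXt; have := wingT ht; move: hY.
  by rewrite /inF_bounds /RD_wing /covers /in_wing /=; lia.
- have := (sD _ ht').2 RDYt'; have := wingT ht'; move: hX.
  by rewrite /inF_bounds /RD_wing /covers /in_wing /=; lia.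
Qed.

Lemma same_traces_eq X Y : inF_bounds n X -> inF_bounds n Y ->
  avoids_tau n T X -> avoids_tau n T Y -> same_traces n T X Y -> X = Y.
Proof.
case: X Y => a b [a' b'] hX hY avX avY S; have S' := same_traces_sym S.
case: (boolP ((a <= n - 1) && (n <= a + b))) => [/andP[an nab] | IIIX].
  exact: same_traces_regionIII hX hY S an nab.
case: (boolP ((a' <= n - 1) && (n <= a' + b'))) => [/andP[an nab] | IIIY].
  exact/esym/(same_traces_regionIII hY hX S' an nab).
have [abn | ean] : a + b <= n - 1 \/ a = n by move: hX IIIX; rewrite /inF_bounds /=; lia.
all: have [abn' | ean'] : a' + b' <= n - 1 \/ a' = n by move: hY IIIY; rewrite /inF_bounds /=; lia.
- exact: same_traces_regionI.
- by subst a'; case: (same_traces_not_IV_I hY avY hX abn avX S').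
- by subst a; case: (same_traces_not_IV_I hX avX hY abn' avY S).
- by subst a a'; rewrite (same_traces_regionIV hX hY avX avY S).
Qed.

End Separation.

Lemma is_sigma_support_eq n T R X Y s : is_sigma n T R X s -> is_sigma n T R Y s ->
  {in T, R n X =1 R n Y}.
Proof.
move=> hX hY; suff e : [seq t <- T | R n X t] =i [seq t <- T | R n Y t].
  by move=> t ht; have := e t; rewrite !mem_filter ht !andbT.
move: hX hY; rewrite /is_sigma.
case: eqP => [-> | _]; case: eqP => [-> // | _].
- by move=> -> [w []].
- by case=> w [->].
- by move=> [w [-> _ _ hw _]] [w' [[<-] _ _ hw' _]] t; rewrite -hw -hw'.
Qed.

Lemma same_traces_of_supports n T X Y : 2 <= n -> (forall t : obj, t \in T -> in_wing n t) ->
  inF_bounds n X -> inF_bounds n Y -> {in T, RT n X =1 RT n Y} -> {in T, RD n X =1 RD n Y} ->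
  same_traces n T X Y.
Proof.
move=> n2 wingT hX hY eT eD; split=> t ht; have wt := wingT t ht.
- by rewrite -(RT_wingE n2 wt hX) -(RT_wingE n2 wt hY) eT.
- by rewrite -(RD_wingE n2 wt hX) -(RD_wingE n2 wt hY) eD.
Qed.

Lemma avoids_tau_of_notin n T X : 2 <= n -> X \notin map (tau n) T -> avoids_tau n T X.
Proof.
move=> n2 hX t ht Xt; split=> t1 eX; move/negP: hX; apply; apply/mapP; exists t => //.
  by rewrite /tau t1 /=; case: X Xt eX => x y /= -> ->.
rewrite /tau ifF; last by apply/eqP; lia.
by case: X Xt eX => x y /= -> eX; congr pair; lia.
Qed.

Theorem lemma4p5 (n : nat) (T : seq obj) :
  2 <= n ->
  all (valid n) T -> uniq T -> size T = n - 1 -> maximal_rigid n T ->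
  (1, n - 1) \in T ->
  forall X Y : obj,
  inF n X -> inF n Y ->
  X \notin map (tau n) T -> Y \notin map (tau n) T ->
  forall sTX sTY sDX sDY : option str,
  is_sigma n T RT X sTX -> is_sigma n T RT Y sTY ->
  is_sigma n T RD X sDX -> is_sigma n T RD Y sDY ->
  sTX = sTY -> sDX = sDY -> X = Y.
Proof.
move=> n2 validT _ _ maxT topT X Y FX FY tX tY sTX sTY sDX sDY TX TY DX DY eT eD.
subst sTY sDY.
have wingT := summand_in_wing n2 validT maxT topT.
have min_coverT := exists_min_cover n2 validT maxT topT.
have [hX hY] := (inF_boundsP FX, inF_boundsP FY).
apply: (same_traces_eq n2 wingT topT min_coverT hX hY).
- exact: avoids_tau_of_notin n2 tX.
- exact: avoids_tau_of_notin n2 tY.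
apply: same_traces_of_supports n2 wingT hX hY _ _.
- exact: is_sigma_support_eq TX TY.
- exact: is_sigma_support_eq DX DY.
Qed.
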